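(* Let $\mathfrak g\xrightarrow{\mu}\mathfrak h$ be a crossed module of Lie algebras, $\phi:W\to V$ linear, $\rho$ a 2-representation on $\phi$, and $\omega\in C^{p,q}_r(\mathfrak g_1,\phi)$. Then $(\delta^{(r+1)}\delta_{(1)}-\delta_{(1)}\delta^{(r)})\omega=0\in C^{p,q+1}_{r+1}(\mathfrak g_1,\phi)$; thus, for fixed $p$, the spaces $C^{p,q}_r(\mathfrak g_1,\phi)$ with differentials $\delta^{(r)}$ and $\delta_{(1)}$ form a double complex (the $p$-page).
   Context: Crossed module: Lie algebras $\mathfrak g,\mathfrak h$, Lie homomorphism $\mu$, action $\mathcal L:\mathfrak h\to\mathrm{Der}(\mathfrak g)$ with $\mu(\mathcal L_yx)=[y,\mu(x)]$, $\mathcal L_{\mu(x_0)}x_1=[x_0,x_1]$; $\mathfrak g\oplus_{\mathcal L}\mathfrak h$ has bracket $[(x_0,y_0),(x_1,y_1)]=([x_0,x_1]+\mathcal L_{y_0}x_1-\mathcal L_{y_1}x_0,[y_0,y_1])$. 2-representation: linear $\rho_0^1:\mathfrak h\to\mathfrak{gl}(W)$, $\rho_0^0:\mathfrak h\to\mathfrak{gl}(V)$, $\rho_1:\mathfrak g\to\mathrm{Hom}(V,W)$ with $\rho_0^1,\rho_0^0$ representations, $\phi\rho_0^1(y)=\rho_0^0(y)\phi$, $\rho_1([x_0,x_1])=\rho_1(x_0)\phi\rho_1(x_1)-\rho_1(x_1)\phi\rho_1(x_0)$, $\rho_0^0(\mu(x))=\phi\rho_1(x)$, $\rho_0^1(\mu(x))=\rho_1(x)\phi$,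 $\rho_1(\mathcal L_yx)=\rho_0^1(y)\rho_1(x)-\rho_1(x)\rho_0^0(y)$. $\mathfrak g_0=\mathfrak h$; for $p\ge1$, $\mathfrak g_p=\mathfrak g^p\oplus\mathfrak h$, elements $(x^0,\dots,x^{p-1};y)$, a Lie algebra via identification with composable strings $(a_0,\dots,a_{p-1})\in(\mathfrak g\oplus_{\mathcal L}\mathfrak h)^p$, $a_j=(x^j,y+\sum_{k>j}\mu(x^k))$, componentwise bracket; $\hat t_p(x^0,\dots,x^{p-1};y)=y+\sum_j\mu(x^j)$, $\hat t_0=\mathrm{id}$. $C^{p,q}_r=\bigwedge^q\mathfrak g_p^*\otimes\bigwedge^r\mathfrak g^*\otimes W$ for $r\ge1$, $C^{p,q}_0=\bigwedge^q\mathfrak g_p^*\otimes V$; elements $\omega(\Xi;Z)$. $X(j),X(m,n)$ denote removal of entries. $\delta^{(r)}:C^{p,q}_r\to C^{p,q+1}_r$, $\delta^{(r)}\omega(\xi_0,\dots,\xi_q;Z)=\sum_j(-1)^j(\rho^{(r)}(\hat t_p(\xi_j))\omega(\Xi(j);\cdot))(Z)+\sum_{m<n}(-1)^{m+n}\omega([\xi_m,\xi_n],\Xi(m,n);Z)$, with $(\rho^{(r)}(y)\beta)(x_1,\dots,x_r)=\rho_0^1(y)\beta(x_1,\dots,x_r)-\sum_k\beta(x_1,\dots,\mathcal L_yx_k,\dots,x_r)$ for $r\ge1$ and $\rho^{(0)}=\rho_0^0$. $\delta_{(1)}:C^{p,q}_r\to C^{p,q}_{r+1}$: $\delta_{(1)}\omega(\Xi;x)=\rho_1(x)\omega(\Xi)$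 for $r=0$; for $r\ge1$, $\delta_{(1)}\omega(\Xi;z_0,\dots,z_r)=\sum_k(-1)^k\rho_0^1(\mu(z_k))\omega(\Xi;Z(k))+\sum_{a<b}(-1)^{a+b}\omega(\Xi;[z_a,z_b],Z(a,b))$. *)

From mathcomp Require Import all_boot all_algebra.
Set Implicit Arguments. Unset Strict Implicit. Unset Printing Implicit Defensive.
Import GRing.Theory.
Local Open Scope ring_scope.

Section Defs.
Variable K : fieldType.

Record is_lie (L : lmodType K) (br : L -> L -> L) : Prop := IsLie {
  lie_linl : forall (a : K) x y z, br (a *: x + y) z = a *: br x z + br y z;
  lie_linr : forall (a : K) x y z, br z (a *: x + y) = a *: br z x + br z y;
  lie_alt  : forall x, br x x = 0;
  lie_jacobi : forall x y z, br x (br y z) + br y (br z x) + br z (br x y) = 0 }.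

Definition is_linear_map (U U' : lmodType K) (f : U -> U') : Prop :=
  forall (a : K) u v, f (a *: u + v) = a *: f u + f v.

Variables (G H : lmodType K) (brg : G -> G -> G) (brh : H -> H -> H)
  (mu : G -> H) (L : H -> G -> G).

Record is_crossed_module : Prop := IsCrossedModule {
  cm_mu_lin : is_linear_map mu;
  cm_mu_hom : forall x1 x2, mu (brg x1 x2) = brh (mu x1) (mu x2);
  cm_L_lin  : forall (a : K) y y' x, L (a *: y + y') x = a *: L y x + L y' x;
  cm_L_lin2 : forall y, is_linear_map (L y);
  cm_L_der  : forall y x1 x2, L y (brg x1 x2) = brg (L y x1) x2 + brg x1 (L y x2);
  cm_L_hom  : forall y1 y2 x, L (brh y1 y2) x = L y1 (L y2 x) - L y2 (L y1 x);
  cm_equiv  : forall y x, mu (L y x) = brh y (mu x);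
  cm_peiffer : forall x0 x1, L (mu x0) x1 = brg x0 x1 }.

Variables (W V : lmodType K) (phi : W -> V)
  (rho01 : H -> W -> W) (rho00 : H -> V -> V) (rho1 : G -> V -> W).

Record is_2rep : Prop := Is2Rep {
  rep_phi_lin : is_linear_map phi;
  rep_rho01_lin1 : forall (a : K) y y' w, rho01 (a *: y + y') w = a *: rho01 y w + rho01 y' w;
  rep_rho01_lin2 : forall y, is_linear_map (rho01 y);
  rep_rho00_lin1 : forall (a : K) y y' v, rho00 (a *: y + y') v = a *: rho00 y v + rho00 y' v;
  rep_rho00_lin2 : forall y, is_linear_map (rho00 y);
  rep_rho1_lin1 : forall (a : K) x x' v, rho1 (a *: x + x') v = a *: rho1 x v + rho1 x' v;
  rep_rho1_lin2 : forall x, is_linear_map (rho1 x);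
  rep_rho01_rep : forall y1 y2 w,
    rho01 (brh y1 y2) w = rho01 y1 (rho01 y2 w) - rho01 y2 (rho01 y1 w);
  rep_rho00_rep : forall y1 y2 v,
    rho00 (brh y1 y2) v = rho00 y1 (rho00 y2 v) - rho00 y2 (rho00 y1 v);
  rep_phi_equiv : forall y w, phi (rho01 y w) = rho00 y (phi w);
  rep_rho1_br : forall x0 x1 v,
    rho1 (brg x0 x1) v = rho1 x0 (phi (rho1 x1 v)) - rho1 x1 (phi (rho1 x0 v));
  rep_rho00_mu : forall x v, rho00 (mu x) v = phi (rho1 x v);
  rep_rho01_mu : forall x w, rho01 (mu x) w = rho1 x (phi w);
  rep_rho1_L : forall y x v, rho1 (L y x) v = rho01 y (rho1 x v) - rho1 x (rho00 y v) }.

Variable p : nat.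

(* g_p = g^p (+) h, elements (x^0,...,x^{p-1}; y); for p = 0 this is h. *)
Local Notation gp := ({ffun 'I_p -> G} * H)%type.

(* the h-component y + sum_{k>j} mu(x^k) of the j-th entry of the composable string *)
Definition gp_ycomp (xi : gp) (j : 'I_p) : H :=
  xi.2 + \sum_(k < p | (j < k)%N) mu (xi.1 k).

(* bracket of g_p, via componentwise bracket of composable strings in g x|_L h *)
Definition gp_br (xi xi' : gp) : gp :=
  ([ffun j => brg (xi.1 j) (xi'.1 j) + L (gp_ycomp xi j) (xi'.1 j)
                - L (gp_ycomp xi' j) (xi.1 j)], brh xi.2 xi'.2).

Definition hat_t (xi : gp) : H := xi.2 + \sum_(j < p) mu (xi.1 j).

Definition rem_at (T : Type) (j : nat) (s : seq T) : seq T := take j s ++ drop j.+1 s.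

Definition sgn (n : nat) : K := (-1) ^+ n.

(* Cochains are represented as functions of lists of arguments; membership in
   C^{p,q}_r is expressed by the predicates below (alternating and multilinear
   on arguments of the right lengths). *)
Definition multilin_alt (T U : lmodType K) (n : nat) (f : seq T -> U) : Prop :=
  (forall s, size s = n -> forall i, (i < n)%N -> forall (a : K) u v,
      f (set_nth 0 s i (a *: u + v)) = a *: f (set_nth 0 s i u) + f (set_nth 0 s i v))
  /\ (forall s, size s = n -> forall i j, (i < j < n)%N -> nth 0 s i = nth 0 s j -> f s = 0).

(* omega in C^{p,q}_0 = wedge^q g_p^* (x) V *)
Definition cochain0 (q : nat) (w : seq gp -> V) : Prop := multilin_alt q w.

(* omega in C^{p,q}_r = wedge^q g_p^* (x) wedge^r g^* (x) W, r >= 1 *)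
Definition cochain (q r : nat) (w : seq gp -> seq G -> W) : Prop :=
  (forall Z, size Z = r -> multilin_alt q (fun Xi => w Xi Z)) /\
  (forall Xi, size Xi = q -> multilin_alt r (fun Z => w Xi Z)).

Definition delta_up0 (w : seq gp -> V) : seq gp -> V := fun Xi =>
  \sum_(j < size Xi) sgn j *: rho00 (hat_t (nth 0 Xi j)) (w (rem_at j Xi))
  + \sum_(m < size Xi) \sum_(n < size Xi | (m < n)%N)
      sgn (m + n) *: w (gp_br (nth 0 Xi m) (nth 0 Xi n) :: rem_at m (rem_at n Xi)).

(* delta^(r) : C^{p,q}_r -> C^{p,q+1}_r, r >= 1 (r = length of Z) *)
Definition delta_up (w : seq gp -> seq G -> W) : seq gp -> seq G -> W := fun Xi Z =>
  \sum_(j < size Xi) sgn j *: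
     (rho01 (hat_t (nth 0 Xi j)) (w (rem_at j Xi) Z)
      - \sum_(k < size Z)
          w (rem_at j Xi) (set_nth 0 Z k (L (hat_t (nth 0 Xi j)) (nth 0 Z k))))
  + \sum_(m < size Xi) \sum_(n < size Xi | (m < n)%N)
      sgn (m + n) *: w (gp_br (nth 0 Xi m) (nth 0 Xi n) :: rem_at m (rem_at n Xi)) Z.

Definition delta_one0 (w : seq gp -> V) : seq gp -> seq G -> W := fun Xi Z =>
  rho1 (nth 0 Z 0) (w Xi).

(* delta_(1) : C^{p,q}_r -> C^{p,q}_{r+1}, r >= 1 (r+1 = length of Z) *)
Definition delta_one (w : seq gp -> seq G -> W) : seq gp -> seq G -> W := fun Xi Z =>
  \sum_(k < size Z) sgn k *: rho01 (mu (nth 0 Z k)) (w Xi (rem_at k Z))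
  + \sum_(a < size Z) \sum_(b < size Z | (a < b)%N)
      sgn (a + b) *: w Xi (brg (nth 0 Z a) (nth 0 Z b) :: rem_at a (rem_at b Z)).

End Defs.

From HB Require Import structures.
From mathcomp Require Import all_boot all_algebra zify.
Set Implicit Arguments. Unset Strict Implicit. Unset Printing Implicit Defensive.
Import GRing.Theory.
Local Open Scope ring_scope.

(* On the g_p-arguments,
   delta^(r) acts through the operators rho^(r)(y) on W-valued cochains of g
   (here [rho_cochain y]) plus bracket terms that only rearrange the g_p-arguments;
   delta_(1) is a differential [delta_g] in the g-arguments alone, linear in the
   cochain.  The commutator therefore reduces to
   delta_g rho^(r)(y) = rho^(r)(y) delta_g.  The rho_0^1(mu _)-part of delta_g
   commutes with rho^(r)(y) because rho_0^1 is a representation and mu is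
   h-equivariant, and the bracket part because L_y is a derivation of g.  For
   r = 0 the identity is the axiom rho_1(L_y x) = rho_0^1(y) rho_1(x) - rho_1(x) rho_0^0(y). *)

Section LinearMap.
Variables (K : fieldType) (U U' : lmodType K) (f : U -> U').
Hypothesis f_lin : is_linear_map f.
HB.instance Definition _ := GRing.isLinear.Build K U U' *:%R f f_lin.

Lemma linear_mapD x y : f (x + y) = f x + f y. Proof. exact: linearD. Qed.
Lemma linear_mapB x y : f (x - y) = f x - f y. Proof. exact: linearB. Qed.
Lemma linear_mapZ (a : K) x : f (a *: x) = a *: f x. Proof. exact: linearZ. Qed.
Lemma linear_map_sum (I : Type) (r : seq I) (P : pred I) (F : I -> U) :
  f (\sum_(i <- r | P i) F i) = \sum_(i <- r | P i) f (F i).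
Proof. exact: linear_sum. Qed.
End LinearMap.

Lemma nth_rem_at (T : Type) (x0 : T) k s i :
  nth x0 (rem_at k s) i = nth x0 s (bump k i).
Proof.
rewrite /rem_at /bump nth_cat size_take.
case: (ltnP k (size s)) => hk.
  case: (ltnP i k) => hi; first by rewrite nth_take // add0n.
  by rewrite nth_drop add1n; congr nth; lia.
rewrite (drop_oversize (n := k.+1)); last lia.
case: (ltnP i (size s)) => hi.
  by rewrite take_oversize // leqNgt (leq_trans hi hk).
by rewrite !nth_default //; case: (k <= i)%N; rewrite /=; lia.
Qed.

Lemma size_rem_at (T : Type) k (s : seq T) :
  (k < size s)%N -> size (rem_at k s) = (size s).-1.
Proof. by move=> hk; rewrite /rem_at size_cat size_take hk size_drop; lia. Qed.

Lemma size_rem_at2 (T : Type) a b (s : seq T) :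
  (a < b)%N -> (b < size s)%N -> (size (rem_at a (rem_at b s))).+2 = size s.
Proof. by move=> hab hb; rewrite !size_rem_at //; lia. Qed.

Lemma size_set_nth_lt (T : Type) (x0 : T) s k v :
  (k < size s)%N -> size (set_nth x0 s k v) = size s.
Proof. by move=> hk; rewrite size_set_nth; apply/maxn_idPr. Qed.

Lemma rem_at_set_nth_eq (T : Type) (x0 : T) s k v :
  (k < size s)%N -> rem_at k (set_nth x0 s k v) = rem_at k s.
Proof.
move=> hk; apply: (@eq_from_nth _ x0); first by rewrite !size_rem_at ?size_set_nth_lt.
by move=> i _; rewrite !nth_rem_at nth_set_nth /= eq_sym (negbTE (neq_bump k i)).
Qed.

Lemma rem_at_set_nth_bump (T : Type) (x0 : T) s k l v :
  (k < size s)%N -> (bump k l < size s)%N ->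
  rem_at k (set_nth x0 s (bump k l) v) = set_nth x0 (rem_at k s) l v.
Proof.
move=> hk hl; apply: (@eq_from_nth _ x0).
  rewrite size_set_nth !size_rem_at ?size_set_nth_lt //.
  by apply/esym/maxn_idPr; move: hl; rewrite /bump; case: (leqP k l) => /=; lia.
move=> i _; rewrite !nth_rem_at !nth_set_nth /= nth_rem_at.
by rewrite (inj_eq (can_inj (bumpK k))).
Qed.

Lemma bump_eq_lt a b x : (a < b)%N -> (a == bump b x) = (a == x).
Proof. by move=> h; rewrite /bump; case: (leqP b x) => /= h2; apply/eqP/eqP; lia. Qed.

Section CochainsOnG.
Variables (K : fieldType) (G H W : lmodType K).
Variables (brg : G -> G -> G) (mu : G -> H) (L : H -> G -> G) (rho : H -> W -> W).
Hypothesis rho_lin : forall y, is_linear_map (rho y).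

Implicit Types (beta : seq G -> W) (Z : seq G) (y : H).

Definition delta_rho beta Z : W :=
  \sum_(k < size Z) sgn K k *: rho (mu (nth 0 Z k)) (beta (rem_at k Z)).

Definition delta_br beta Z : W :=
  \sum_(a < size Z) \sum_(b < size Z | (a < b)%N)
    sgn K (a + b) *: beta (brg (nth 0 Z a) (nth 0 Z b) :: rem_at a (rem_at b Z)).

Definition delta_g beta Z : W := delta_rho beta Z + delta_br beta Z.

Definition lie_deriv y beta Z : W :=
  \sum_(k < size Z) beta (set_nth 0 Z k (L y (nth 0 Z k))).

Definition rho_cochain y beta Z : W := rho y (beta Z) - lie_deriv y beta Z.

Lemma delta_g_add (f g : seq G -> W) Z :
  delta_g (fun Z' => f Z' + g Z') Z = delta_g f Z + delta_g g Z.
Proof.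
rewrite /delta_g /delta_rho /delta_br addrACA; congr (_ + _); rewrite -big_split.
  by apply: eq_bigr => k _; rewrite (linear_mapD (rho_lin _)) scalerDr.
by apply: eq_bigr => a _; rewrite -big_split; apply: eq_bigr => b _; rewrite scalerDr.
Qed.

Lemma delta_g_scale (c : K) (f : seq G -> W) Z :
  delta_g (fun Z' => c *: f Z') Z = c *: delta_g f Z.
Proof.
rewrite /delta_g /delta_rho /delta_br scalerDr !scaler_sumr; congr (_ + _).
  by apply: eq_bigr => k _; rewrite (linear_mapZ (rho_lin _)) !scalerA mulrC.
by apply: eq_bigr => a _; rewrite scaler_sumr; apply: eq_bigr => b _; rewrite !scalerA mulrC.
Qed.

Lemma delta_g_sum (I : Type) (r : seq I) (P : pred I) (F : I -> seq G -> W) Z :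
  delta_g (fun Z' => \sum_(i <- r | P i) F i Z') Z = \sum_(i <- r | P i) delta_g (F i) Z.
Proof.
rewrite /delta_g /delta_rho /delta_br big_split /=; congr (_ + _).
  rewrite exchange_big; apply: eq_bigr => k _.
  by rewrite (linear_map_sum (rho_lin _)) scaler_sumr.
rewrite exchange_big; apply: eq_bigr => a _.
by rewrite exchange_big; apply: eq_bigr => b _; rewrite scaler_sumr.
Qed.

Lemma lie_deriv_cons y beta z Z :
  lie_deriv y beta (z :: Z) = beta (L y z :: Z) + lie_deriv y (fun s => beta (z :: s)) Z.
Proof. by rewrite /lie_deriv big_ord_recl. Qed.

Lemma lie_deriv_delta_rho y beta Z :
  lie_deriv y (delta_rho beta) Z =
  \sum_(k < size Z) sgn K k *: rho (mu (L y (nth 0 Z k))) (beta (rem_at k Z))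
  + delta_rho (lie_deriv y beta) Z.
Proof.
rewrite /lie_deriv /delta_rho.
under eq_bigr => l _ do rewrite size_set_nth_lt //.
rewrite exchange_big -big_split /=; apply: eq_bigr => k _.
rewrite (bigD1_ord k) //= nth_set_nth /= eqxx rem_at_set_nth_eq //.
rewrite (linear_map_sum (rho_lin _)) scaler_sumr size_rem_at //; congr (_ + _).
apply: eq_bigr => l _ /=.
rewrite nth_set_nth /= (negbTE (neq_bump k l)) rem_at_set_nth_bump ?nth_rem_at //.
exact: (ltn_ord (lift k l)).
Qed.

Lemma lie_deriv_delta_br y beta Z :
  lie_deriv y (delta_br beta) Z =
  \sum_(a < size Z) \sum_(b < size Z | (a < b)%N) sgn K (a + b) *:
    (beta (brg (L y (nth 0 Z a)) (nth 0 Z b) :: rem_at a (rem_at b Z))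
     + beta (brg (nth 0 Z a) (L y (nth 0 Z b)) :: rem_at a (rem_at b Z))
     + lie_deriv y (fun s => beta (brg (nth 0 Z a) (nth 0 Z b) :: s)) (rem_at a (rem_at b Z))).
Proof.
rewrite /lie_deriv /delta_br.
under eq_bigr => l _ do rewrite size_set_nth_lt //.
rewrite exchange_big /=; apply: eq_bigr => a _.
rewrite exchange_big /=; apply: eq_bigr => b hab.
rewrite -scaler_sumr; congr (_ *: _).
have hb : (b < size Z)%N := ltn_ord b.
have ha' : (a < (size Z).-1)%N by move: hab hb; lia.
have ha_rem : (a < size (rem_at b Z))%N by rewrite size_rem_at.
(* The summands l = b and l = a (the latter is index a after removing b) act
   on z_b and z_a inside the bracket; the remaining ones act on the tail. *)
rewrite (bigD1_ord b) //= (bigD1_ord (Ordinal ha')) //=.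
have eba : bump b a = a by rewrite /bump leqNgt hab.
rewrite eba addrA [X in X + _ = _]addrC; congr (_ + _ + _).
- have := @rem_at_set_nth_bump _ 0 Z b a (L y Z`_a) hb; rewrite eba => -> //.
  by rewrite !nth_set_nth /= eqxx gtn_eqF // rem_at_set_nth_eq.
- by rewrite !nth_set_nth /= eqxx ltn_eqF // rem_at_set_nth_eq.
rewrite !size_rem_at //; apply: eq_bigr => i _ /=.
rewrite !nth_set_nth /= (negbTE (neq_bump b _)) bump_eq_lt // (negbTE (neq_bump a _)).
rewrite rem_at_set_nth_bump //; last exact: ltn_ord (lift (Ordinal hb) (lift (Ordinal ha') i)).
rewrite rem_at_set_nth_bump //; last first.
  by rewrite size_rem_at //; exact: ltn_ord (lift (Ordinal ha') i).
by rewrite !nth_rem_at.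
Qed.

Lemma rho_cochain_add y (f g : seq G -> W) Z :
  rho_cochain y (fun Z' => f Z' + g Z') Z = rho_cochain y f Z + rho_cochain y g Z.
Proof.
by rewrite /rho_cochain /lie_deriv (linear_mapD (rho_lin _)) big_split /= opprD addrACA.
Qed.

Hypothesis rho_mu_L :
  forall y x w, rho (mu (L y x)) w = rho y (rho (mu x) w) - rho (mu x) (rho y w).
Hypothesis L_der : forall y x1 x2, L y (brg x1 x2) = brg (L y x1) x2 + brg x1 (L y x2).

Lemma delta_rho_rho_cochain y beta Z :
  delta_rho (rho_cochain y beta) Z = rho_cochain y (delta_rho beta) Z.
Proof.
rewrite {2}/rho_cochain lie_deriv_delta_rho /delta_rho (linear_map_sum (rho_lin _)).
rewrite opprD addrA -!sumrB; apply: eq_bigr => k _.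
rewrite /rho_cochain (linear_mapB (rho_lin _)) (linear_mapZ (rho_lin _)) rho_mu_L.
by rewrite -!scalerBr subKr.
Qed.

Lemma delta_br_rho_cochain y beta Z :
  (forall u v s, (size s).+2 = size Z -> beta ((u + v) :: s) = beta (u :: s) + beta (v :: s)) ->
  delta_br (rho_cochain y beta) Z = rho_cochain y (delta_br beta) Z.
Proof.
move=> beta_add; rewrite {2}/rho_cochain lie_deriv_delta_br /delta_br.
rewrite (linear_map_sum (rho_lin _)) -sumrB; apply: eq_bigr => a _.
rewrite (linear_map_sum (rho_lin _)) -sumrB; apply: eq_bigr => b hab.
rewrite /rho_cochain lie_deriv_cons L_der beta_add ?(linear_mapZ (rho_lin _)) ?scalerBr //.
exact: size_rem_at2 hab (ltn_ord b).
Qed.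

Lemma delta_g_rho_cochain y beta Z :
  (forall u v s, (size s).+2 = size Z -> beta ((u + v) :: s) = beta (u :: s) + beta (v :: s)) ->
  delta_g (rho_cochain y beta) Z = rho_cochain y (delta_g beta) Z.
Proof.
by move=> beta_add; rewrite /delta_g rho_cochain_add delta_rho_rho_cochain delta_br_rho_cochain.
Qed.

End CochainsOnG.

Lemma multilin_alt_add_head (K : fieldType) (T U : lmodType K) n (f : seq T -> U) :
  multilin_alt n.+1 f -> forall u v s, size s = n -> f ((u + v) :: s) = f (u :: s) + f (v :: s).
Proof.
move=> [f_lin _] u v s hs.
by have := f_lin (0 :: s) (congr1 S hs) 0 (ltn0Sn _) 1 u v; rewrite /= !scale1r.
Qed.

Section PPage.
Variables (K : fieldType) (G H W V : lmodType K).
Variables (brg : G -> G -> G) (brh : H -> H -> H) (mu : G -> H) (L : H -> G -> G).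
Variables (rho01 : H -> W -> W) (rho00 : H -> V -> V) (rho1 : G -> V -> W) (p : nat).
Local Notation gp := ({ffun 'I_p -> G} * H)%type.
Implicit Types (Xi : seq gp) (Z : seq G).

Lemma delta_upE (w : seq gp -> seq G -> W) Xi Z :
  delta_up brg brh mu L rho01 w Xi Z =
  \sum_(j < size Xi)
     sgn K j *: rho_cochain L rho01 (hat_t mu (nth 0 Xi j)) (w (rem_at j Xi)) Z
  + \sum_(m < size Xi) \sum_(n < size Xi | (m < n)%N)
      sgn K (m + n) *:
        w (gp_br brg brh mu L (nth 0 Xi m) (nth 0 Xi n) :: rem_at m (rem_at n Xi)) Z.
Proof. by []. Qed.

Lemma delta_oneE (w : seq gp -> seq G -> W) Xi Z :
  delta_one brg mu rho01 w Xi Z = delta_g brg mu rho01 (w Xi) Z.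
Proof. by []. Qed.

Hypothesis rho01_lin : forall y, is_linear_map (rho01 y).
Hypothesis rho1_lin : forall x, is_linear_map (rho1 x).
Hypothesis rho1_L : forall y x v, rho1 (L y x) v = rho01 y (rho1 x v) - rho1 x (rho00 y v).
Hypothesis rho01_mu_L :
  forall y x w, rho01 (mu (L y x)) w = rho01 y (rho01 (mu x) w) - rho01 (mu x) (rho01 y w).
Hypothesis L_der : forall y x1 x2, L y (brg x1 x2) = brg (L y x1) x2 + brg x1 (L y x2).

Lemma rho_cochain_rho1 y v z :
  rho_cochain L rho01 y (fun Z => rho1 (nth 0 Z 0) v) [:: z] = rho1 z (rho00 y v).
Proof. by rewrite /rho_cochain /lie_deriv big_ord1 /= rho1_L opprB addrC subrK. Qed.

Lemma delta_up_delta_one0 (w : seq gp -> V) Xi z :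
  delta_up brg brh mu L rho01 (delta_one0 rho1 w) Xi [:: z] =
  delta_one0 rho1 (delta_up0 brg brh mu L rho00 w) Xi [:: z].
Proof.
have rho1z_lin := rho1_lin z.
rewrite delta_upE /delta_one0 /delta_up0 /= (linear_mapD rho1z_lin).
rewrite !(linear_map_sum rho1z_lin); congr (_ + _).
  by apply: eq_bigr => j _; rewrite rho_cochain_rho1 (linear_mapZ rho1z_lin).
apply: eq_bigr => m _; rewrite (linear_map_sum rho1z_lin).
by apply: eq_bigr => n _; rewrite (linear_mapZ rho1z_lin).
Qed.

Lemma delta_up_delta_one (w : seq gp -> seq G -> W) Xi Z :
  (forall (j : 'I_(size Xi)) u v s, (size s).+2 = size Z ->
     w (rem_at j Xi) ((u + v) :: s) = w (rem_at j Xi) (u :: s) + w (rem_at j Xi) (v :: s)) ->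
  delta_up brg brh mu L rho01 (delta_one brg mu rho01 w) Xi Z =
  delta_one brg mu rho01 (delta_up brg brh mu L rho01 w) Xi Z.
Proof.
move=> w_add; rewrite delta_upE delta_oneE (delta_g_add _ _ rho01_lin).
rewrite !(delta_g_sum _ _ rho01_lin); congr (_ + _); apply: eq_bigr => j _.
  rewrite (delta_g_scale _ _ rho01_lin (sgn K j)); congr (_ *: _).
  by apply/esym/delta_g_rho_cochain => // u v s; apply: w_add.
rewrite (delta_g_sum _ _ rho01_lin); apply: eq_bigr => n _.
by rewrite (delta_g_scale _ _ rho01_lin (sgn K (j + n))).
Qed.

End PPage.

Theorem mainTheorem7 (K : fieldType) (G H W V : lmodType K)
  (brg : G -> G -> G) (brh : H -> H -> H) (mu : G -> H) (L : H -> G -> G)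
  (phi : W -> V) (rho01 : H -> W -> W) (rho00 : H -> V -> V) (rho1 : G -> V -> W)
  (p q : nat) :
  is_lie brg -> is_lie brh -> is_crossed_module brg brh mu L ->
  is_2rep brg brh mu L phi rho01 rho00 rho1 ->
  (* case r = 0 *)
  (forall w : seq ({ffun 'I_p -> G} * H)%type -> V, cochain0 q w ->
     forall Xi Z, size Xi = q.+1 -> size Z = 1%N ->
       delta_up brg brh mu L rho01 (delta_one0 rho1 w) Xi Z
       - delta_one0 rho1 (delta_up0 brg brh mu L rho00 w) Xi Z = 0) /\
  (* case r >= 1 *)
  (forall (r : nat), (0 < r)%N ->
   forall w : seq ({ffun 'I_p -> G} * H)%type -> seq G -> W, cochain q r w ->
     forall Xi Z, size Xi = q.+1 -> size Z = r.+1 ->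
       delta_up brg brh mu L rho01 (delta_one brg mu rho01 w) Xi Z
       - delta_one brg mu rho01 (delta_up brg brh mu L rho01 w) Xi Z = 0).
Proof.
move=> _ _ cm rep; split.
  move=> w _ Xi [|z [|? ?]] // _ _.
  by rewrite (delta_up_delta_one0 _ _ _ (rep_rho1_lin2 rep) (rep_rho1_L rep)) subrr.
move=> [|m] // _ w [_ w_alt] Xi Z hXi hZ.
have rho01_mu_L y x w' :
    rho01 (mu (L y x)) w' = rho01 y (rho01 (mu x) w') - rho01 (mu x) (rho01 y w').
  by rewrite (cm_equiv cm) (rep_rho01_rep rep).
rewrite (delta_up_delta_one _ (rep_rho01_lin2 rep) rho01_mu_L (cm_L_der cm)) ?subrr //.
move=> j u v s hs; apply: multilin_alt_add_head.
  by apply: w_alt; rewrite size_rem_at // hXi.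
by apply/eqP; rewrite -2!eqSS hs hZ.
Qed.
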